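(* Let $V$ be a quasi-regular mixed lattice vector space and $W$ a subset of $V$. Then $W$ is a regular quasi-ideal if and only if $W=A_{sp}-A_{sp}$ for some ideal $A$ of $V$.
   Context: A mixed lattice vector space is a real vector space $V$ with two partial orderings $\le$ (initial) and $\preceq$ (specific), each compatible with the vector space structure, such that for all $x,y$ the mixed lower envelope $x\curlywedge y=\max\{w: w\preceq x,\ w\le y\}$ and mixed upper envelope $x\curlyvee y=\min\{w: x\preceq w,\ y\le w\}$ exist (max/min with respect to $\le$). $V_p=\{x:0\le x\}$, $V_{sp}=\{x:0\preceq x\}$, $E_p=E\cap V_p$, $E_{sp}=E\cap V_{sp}$. $V$ is quasi-regular if $V_{sp}$ is closed under $\curlywedge,\curlyvee$. A mixed lattice subspace is a linear subspace closed under $\curlywedge,\curlyvee$. A subspace $S$ is regular if $S=S_{sp}-S_{sp}$. An ideal is a mixed lattice subspace that is $(\le)$-order convex ($x\le z\le y$ with $x,y$ in it implies $z$ in it). A quasi-ideal is a mixed lattice subspace $A$ such that $y\in A$ and $0\preceq x\le y$ imply $x\in A$. *)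

From HB Require Import structures.
From mathcomp Require Import all_boot all_order all_algebra.
From mathcomp Require Import reals.
Set Implicit Arguments. Unset Strict Implicit. Unset Printing Implicit Defensive.
Import Order.TTheory GRing.Theory Num.Theory.
Local Open Scope ring_scope.

Definition compatible_order (R : realType) (V : lmodType R) (le : V -> V -> Prop) :=
  [/\ (forall x, le x x),
      (forall x y, le x y -> le y x -> x = y),
      (forall x y z, le x y -> le y z -> le x z),
      (forall x y z, le x y -> le (x + z) (y + z))
    & (forall (a : R) x y, 0 <= a -> le x y -> le (a *: x) (a *: y))].

Definition is_mixed_lower (R : realType) (V : lmodType R)
  (le sle : V -> V -> Prop) (x y w : V) :=
  [/\ sle w x, le w y & forall w', sle w' x -> le w' y -> le w' w].

Definition is_mixed_upper (R : realType) (V : lmodType R)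
  (le sle : V -> V -> Prop) (x y w : V) :=
  [/\ sle x w, le y w & forall w', sle x w' -> le y w' -> le w w'].

(* A mixed lattice vector space structure on V: the initial order [ml_le],
   the specific order [ml_sle], and the (unique, by antisymmetry) envelopes. *)
Record mixedLatticeVS (R : realType) (V : lmodType R) := MixedLatticeVS {
  ml_le : V -> V -> Prop;
  ml_sle : V -> V -> Prop;
  ml_low : V -> V -> V;
  ml_up : V -> V -> V;
  ml_le_compat : compatible_order ml_le;
  ml_sle_compat : compatible_order ml_sle;
  ml_lowP : forall x y, is_mixed_lower ml_le ml_sle x y (ml_low x y);
  ml_upP : forall x y, is_mixed_upper ml_le ml_sle x y (ml_up x y)
}.

Section Defs.
Variables (R : realType) (V : lmodType R) (M : mixedLatticeVS V).
Local Notation le := (ml_le M).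
Local Notation sle := (ml_sle M).
Local Notation low := (ml_low M).
Local Notation up := (ml_up M).

Definition Vsp (x : V) : Prop := sle 0 x.

Definition quasi_regular : Prop :=
  forall x y, Vsp x -> Vsp y -> Vsp (low x y) /\ Vsp (up x y).

Definition linear_subspace (S : V -> Prop) : Prop :=
  S 0 /\ forall (a : R) x y, S x -> S y -> S (a *: x + y).

Definition mixed_lattice_subspace (S : V -> Prop) : Prop :=
  linear_subspace S /\ forall x y, S x -> S y -> S (low x y) /\ S (up x y).

Definition sp_part (E : V -> Prop) (x : V) : Prop := E x /\ Vsp x.

Definition sp_diff (E : V -> Prop) (x : V) : Prop :=
  exists a b, sp_part E a /\ sp_part E b /\ x = a - b.

Definition regular (S : V -> Prop) : Prop :=
  linear_subspace S /\ forall x, S x <-> sp_diff S x.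

Definition ideal (A : V -> Prop) : Prop :=
  mixed_lattice_subspace A /\
  forall x y z, A x -> A y -> le x z -> le z y -> A z.

Definition quasi_ideal (A : V -> Prop) : Prop :=
  mixed_lattice_subspace A /\
  forall x y, A y -> sle 0 x -> le x y -> A x.

End Defs.

From mathcomp Require Import all_boot all_order all_algebra.
From mathcomp Require Import boolp reals.
Set Implicit Arguments. Unset Strict Implicit. Unset Printing Implicit Defensive.
Import Order.TTheory GRing.Theory Num.Theory.
Local Open Scope ring_scope.

(* If A is an ideal, then A_sp is a cone closed under the envelopes (by
   quasi-regularity), and translating x = p - q and y = r - s by q + s turns
   the envelopes of x and y into envelopes of two elements of A_sp; the
   quasi-ideal property of A_sp - A_sp follows from order convexity of A.
   Conversely, for a regular quasi-ideal W take for A the order-convex hull of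
   W. The quasi-ideal property gives A_sp = W_sp, and A is closed under the
   lower envelope because, for a <= x <= b and c <= y, regularity yields
   p in W_sp with x - y <= b - c <= p, so that x - p is a competitor for
   x ⋏ y and a - p <= x ⋏ y. Apart from closing A_sp under the envelopes,
   quasi-regularity is used only to make the specific order stronger than
   the initial one. *)

Section CompatibleOrder.
Variables (R : realType) (V : lmodType R) (le : V -> V -> Prop).
Hypothesis hle : compatible_order le.

Lemma co_refl x : le x x.
Proof. by case: hle. Qed.

Lemma co_anti x y : le x y -> le y x -> x = y.
Proof. by case: hle => _ ha _ _ _; apply: ha. Qed.

Lemma co_trans x y z : le x y -> le y z -> le x z.
Proof. by case: hle => _ _ ht _ _; apply: ht. Qed.

Lemma co_leD2r x y z : le x y -> le (x + z) (y + z).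
Proof. by case: hle => _ _ _ hD _; apply: hD. Qed.

Lemma co_leZ (a : R) x y : 0 <= a -> le x y -> le (a *: x) (a *: y).
Proof. by case: hle => _ _ _ _ hZ; apply: hZ. Qed.

Lemma co_leD2l x y z : le x y -> le (z + x) (z + y).
Proof. by rewrite ![z + _]addrC; apply: co_leD2r. Qed.

Lemma co_leD a b c d : le a b -> le c d -> le (a + c) (b + d).
Proof. by move=> /(co_leD2r c) hab /(co_leD2l b); apply: co_trans. Qed.

Lemma co_subr_ge0 x y : le 0 (y - x) <-> le x y.
Proof.
split; first by move=> /(co_leD2r x); rewrite add0r subrK.
by move=> /(co_leD2r (- x)); rewrite subrr.
Qed.

Lemma co_leN2 x y : le x y -> le (- y) (- x).
Proof. by move=> /co_subr_ge0 h; apply/co_subr_ge0; rewrite opprK addrC. Qed.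

Lemma co_lerBl x p : le 0 p -> le (x - p) x.
Proof. by move=> p_ge0; apply/co_subr_ge0; rewrite opprB addrC subrK. Qed.

End CompatibleOrder.

Section LinearSubspace.
Variables (R : realType) (V : lmodType R) (S : V -> Prop).

Lemma linear_subspaceP :
  S 0 -> (forall x, S x -> S (- x)) ->
  (forall (a : R) x, 0 <= a -> S x -> S (a *: x)) ->
  (forall x y, S x -> S y -> S (x + y)) -> linear_subspace S.
Proof.
move=> S0 SN SZ SD; split=> // a x y Sx Sy; apply: SD => //.
have [a_ge0 | a_lt0] := lerP 0 a; first exact: SZ.
rewrite -[a]opprK scaleNr -scalerN; apply: SZ; last exact: SN.
by rewrite oppr_ge0 ltW.
Qed.

Hypothesis hS : linear_subspace S.

Lemma linear_subspace0 : S 0.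
Proof. by case: hS. Qed.

Lemma linear_subspaceD x y : S x -> S y -> S (x + y).
Proof. by case: hS => _ h Sx Sy; have := h 1 x y Sx Sy; rewrite scale1r. Qed.

Lemma linear_subspaceZ (a : R) x : S x -> S (a *: x).
Proof. by case: hS => S0 h Sx; have := h a x 0 Sx S0; rewrite addr0. Qed.

Lemma linear_subspaceN x : S x -> S (- x).
Proof. by move=> /(linear_subspaceZ (-1)); rewrite scaleN1r. Qed.

Lemma linear_subspaceB x y : S x -> S y -> S (x - y).
Proof. by move=> Sx /linear_subspaceN; apply: linear_subspaceD. Qed.

End LinearSubspace.

Section MixedLattice.
Variables (R : realType) (V : lmodType R) (M : mixedLatticeVS V).
Local Notation le := (ml_le M).
Local Notation sle := (ml_sle M).
Local Notation low := (ml_low M).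
Local Notation up := (ml_up M).
Let L := ml_le_compat M.
Let S := ml_sle_compat M.

Lemma mixed_upper_unique x y w : is_mixed_upper le sle x y w -> w = up x y.
Proof.
case=> xw yw wmin; have [xu yu umin] := ml_upP M x y.
by apply: (co_anti L); [apply: wmin | apply: umin].
Qed.

Lemma mixed_lower_unique x y w : is_mixed_lower le sle x y w -> w = low x y.
Proof.
case=> wx wy wmax; have [lx ly lmax] := ml_lowP M x y.
by apply: (co_anti L); [apply: lmax | apply: wmax].
Qed.

Lemma up_opp x y : up x y = - low (- x) (- y).
Proof.
symmetry; apply: mixed_upper_unique; have [lx ly lmax] := ml_lowP M (- x) (- y).
split.
- by rewrite -{1}[x]opprK; apply: (co_leN2 S).
- by rewrite -{1}[y]opprK; apply: (co_leN2 L).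
move=> w xw yw; rewrite -[w]opprK; apply: (co_leN2 L).
by apply: lmax; [exact: (co_leN2 S) | exact: (co_leN2 L)].
Qed.

Lemma low_addr x y z : low (x + z) (y + z) = low x y + z.
Proof.
symmetry; apply: mixed_lower_unique; have [lx ly lmax] := ml_lowP M x y.
split; [exact: (co_leD2r S) | exact: (co_leD2r L) |].
move=> w wx wy; rewrite -[w](subrK z); apply: (co_leD2r L); apply: lmax.
  by rewrite -[x](addrK z); apply: (co_leD2r S).
by rewrite -[y](addrK z); apply: (co_leD2r L).
Qed.

Lemma quasi_regular_sle_le (HQ : quasi_regular M) x y : sle x y -> le x y.
Proof.
move=> /(co_subr_ge0 S) d_sp; apply/(co_subr_ge0 L).
have [l0 ld _] := ml_lowP M 0 (y - x).
have [l_sp _] := HQ _ _ (co_refl S 0) d_sp.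
by rewrite -(co_anti S l0 l_sp).
Qed.

Lemma mixed_lattice_subspaceP (A : V -> Prop) :
  linear_subspace A -> (forall x y, A x -> A y -> A (low x y)) ->
  mixed_lattice_subspace M A.
Proof.
move=> lA lowA; split=> // x y Ax Ay; split; first exact: lowA.
by rewrite up_opp; apply/(linear_subspaceN lA)/lowA; apply: linear_subspaceN.
Qed.

Section SpecificPart.
Variable A : V -> Prop.
Hypothesis lA : linear_subspace A.

Lemma sp_part0 : sp_part M A 0.
Proof. by split; [exact: linear_subspace0 | exact: (co_refl S 0)]. Qed.

Lemma sp_partD x y : sp_part M A x -> sp_part M A y -> sp_part M A (x + y).
Proof.
case=> Ax sx [Ay sy]; split; first exact: linear_subspaceD.
by rewrite /Vsp -(addr0 0); apply: (co_leD S).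
Qed.

Lemma sp_partZ (a : R) x : 0 <= a -> sp_part M A x -> sp_part M A (a *: x).
Proof.
move=> a_ge0 [Ax sx]; split; first exact: linear_subspaceZ.
by rewrite /Vsp -(scaler0 _ a); apply: (co_leZ S).
Qed.

Lemma sp_diff_subspace : linear_subspace (sp_diff M A).
Proof.
apply: linear_subspaceP.
- by exists 0, 0; rewrite subr0; split; [exact: sp_part0 | split; first exact: sp_part0].
- by move=> _ [p [q [Ap [Aq ->]]]]; exists q, p; rewrite opprB.
- move=> a _ a_ge0 [p [q [Ap [Aq ->]]]]; exists (a *: p), (a *: q).
  by rewrite scalerBr; split; [exact: sp_partZ | split; first exact: sp_partZ].
- move=> _ _ [p [q [Ap [Aq ->]]]] [r [s [Ar [As ->]]]]; exists (p + r), (q + s).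
  by rewrite opprD addrACA; split; [exact: sp_partD | split; first exact: sp_partD].
Qed.

Lemma sp_diff_sp_part p : sp_part M A p -> sp_part M (sp_diff M A) p.
Proof.
move=> Ap; split; last by case: Ap.
by exists p, 0; rewrite subr0; split=> //; split=> //; exact: sp_part0.
Qed.

Lemma sp_diff_regular : regular M (sp_diff M A).
Proof.
split=> [|x]; first exact: sp_diff_subspace.
split=> -[p [q [Ap [Aq ->]]]].
  by exists p, q; split; [exact: sp_diff_sp_part | split; first exact: sp_diff_sp_part].
by case: Ap Aq => [Ap _] [Aq _]; apply: (linear_subspaceB sp_diff_subspace).
Qed.

Lemma sp_diff_le (HQ : quasi_regular M) u :
  sp_diff M A u -> exists2 p, sp_part M A p & le u p.
Proof.
case=> p [q [Ap [[_ sq] ->]]]; exists p => //.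
exact/(co_lerBl L)/quasi_regular_sle_le.
Qed.

Lemma sp_diff_mixed_lattice_subspace (HQ : quasi_regular M) :
  (forall x y, A x -> A y -> A (low x y)) ->
  mixed_lattice_subspace M (sp_diff M A).
Proof.
move=> lowA; apply: mixed_lattice_subspaceP; first exact: sp_diff_subspace.
move=> _ _ [p [q [Ap [Aq ->]]]] [r [s [Ar [As ->]]]].
have Eps : p - q = (p + s) - (q + s) by rewrite opprD addrACA subrr addr0.
have Erq : r - s = (r + q) - (q + s) by rewrite opprD addrA addrK.
rewrite Eps Erq low_addr.
have [[Aps sps] [Arq srq]] := (sp_partD Ap As, sp_partD Ar Aq).
exists (low (p + s) (r + q)), (q + s); split; last by split; first exact: sp_partD.
by split; [exact: lowA | exact: (HQ _ _ sps srq).1].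
Qed.

End SpecificPart.

Lemma sp_diff_quasi_ideal (HQ : quasi_regular M) (A : V -> Prop) :
  ideal M A -> quasi_ideal M (sp_diff M A).
Proof.
move=> [[lA closedA] convexA]; split.
  by apply: sp_diff_mixed_lattice_subspace => // x y Ax Ay; exact: (closedA x y Ax Ay).1.
move=> x y /(sp_diff_le HQ) [p [Ap _] yp] sx xy.
have Ax : A x.
  apply: (convexA 0 p) => //; first exact: linear_subspace0.
    exact: quasi_regular_sle_le.
  exact: (co_trans L xy yp).
by exists x, 0; rewrite subr0; split=> //; split=> //; exact: sp_part0.
Qed.

Section OrderHull.
Variable W : V -> Prop.

Definition order_hull (x : V) : Prop :=
  exists a b, [/\ W a, W b, le a x & le x b].

Lemma order_hull_convex x y z :
  order_hull x -> order_hull y -> le x z -> le z y -> order_hull z.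
Proof.
move=> [a [_ [Wa _ ax _]]] [_ [b [_ Wb _ yb]]] xz zy.
by exists a, b; split=> //; [exact: (co_trans L ax xz) | exact: (co_trans L zy yb)].
Qed.

Hypothesis lW : linear_subspace W.

Lemma order_hull_subspace : linear_subspace order_hull.
Proof.
apply: linear_subspaceP.
- by exists 0, 0; split; try exact: (co_refl L); exact: linear_subspace0.
- move=> x [a [b [Wa Wb ax xb]]]; exists (- b), (- a).
  by split; apply: (co_leN2 L) || apply: (linear_subspaceN lW).
- move=> c x c_ge0 [a [b [Wa Wb ax xb]]]; exists (c *: a), (c *: b).
  by split; apply: (co_leZ L) || apply: (linear_subspaceZ lW).
- move=> x y [a [b [Wa Wb ax xb]]] [c [d [Wc Wd cy yd]]]; exists (a + c), (b + d).
  by split; apply: (co_leD L) || apply: (linear_subspaceD lW).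
Qed.

Lemma order_hull_low (HQ : quasi_regular M) : regular M W ->
  forall x y, order_hull x -> order_hull y -> order_hull (low x y).
Proof.
move=> [_ regW] x y [a [b [Wa Wb ax xb]]] [c [d [Wc Wd cy yd]]].
have [p [Wp sp] bcp] := sp_diff_le HQ ((regW _).1 (linear_subspaceB lW Wb Wc)).
have xyp : le (x - y) p := co_trans L (co_leD L xb (co_leN2 L cy)) bcp.
have xpy : le (x - p) y.
  apply/(co_subr_ge0 L); have -> : y - (x - p) = p - (x - y) by rewrite !opprB addrCA.
  exact/(co_subr_ge0 L).
have [_ ly lmax] := ml_lowP M x y.
exists (a - p), d; split=> //; first exact: (linear_subspaceB lW Wa Wp).
  exact: (co_trans L (co_leD2r L _ ax) (lmax _ (co_lerBl S _ sp) xpy)).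
exact: (co_trans L ly yd).
Qed.

Lemma order_hull_sp_part : quasi_ideal M W ->
  forall x, sp_part M order_hull x <-> sp_part M W x.
Proof.
move=> [_ qW] x; split=> -[hx sx]; split=> //.
  by case: hx => [_ [b [_ Wb _ xb]]]; exact: (qW _ _ Wb sx xb).
by exists x, x; split; try exact: (co_refl L).
Qed.

Lemma order_hull_ideal (HQ : quasi_regular M) : regular M W -> ideal M order_hull.
Proof.
move=> regW; split; last exact: order_hull_convex.
by apply: mixed_lattice_subspaceP; [exact: order_hull_subspace | exact: order_hull_low].
Qed.

Lemma order_hull_sp_diff : quasi_ideal M W -> regular M W ->
  forall x, W x <-> sp_diff M order_hull x.
Proof.
move=> qW [_ regW] x; rewrite /sp_diff.
have -> : sp_part M order_hull = sp_part M W.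
  by rewrite predeqE; exact: order_hull_sp_part.
exact: regW.
Qed.

End OrderHull.
End MixedLattice.

Theorem theorem4p15 (R : realType) (V : lmodType R) (M : mixedLatticeVS V)
  (HQ : quasi_regular M) (W : V -> Prop) :
  (quasi_ideal M W /\ regular M W) <->
  exists A : V -> Prop, ideal M A /\ (forall x, W x <-> sp_diff M A x).
Proof.
split=> [[qW rW] | [A [idA eqW]]].
  have lW : linear_subspace W by case: rW.
  exists (order_hull M W); split; first exact: order_hull_ideal.
  exact: order_hull_sp_diff.
have -> : W = sp_diff M A by rewrite predeqE.
have [[lA _] _] := idA.
by split; [exact: sp_diff_quasi_ideal | exact: sp_diff_regular].
Qed.
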